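(* Let $m,n$ be positive integers. The number of $m\times n$ partial alternating sign matrices whose entries sum to $1$ is $\binom{m+n}{m}-1$.
   Context: An $m\times n$ partial alternating sign matrix is an $m\times n$ matrix with entries in $\{-1,0,1\}$ such that: the entries of each row and of each column sum to $0$ or $1$; the nonzero entries in each row and in each column alternate in sign; in each column the first (topmost) nonzero entry, if any, is $1$, and in each row the last (rightmost) nonzero entry, if any, is $1$. *)

From mathcomp Require Import all_boot all_order all_algebra.
Set Implicit Arguments. Unset Strict Implicit. Unset Printing Implicit Defensive.
Import Order.TTheory GRing.Theory Num.Theory.
Local Open Scope ring_scope.

Fixpoint alternating (s : seq int) : bool :=
  match s with
  | x :: ((y :: _) as t) => (y == - x) && alternating t
  | _ => true
  end.

Definition nonzeros (s : seq int) : seq int := [seq x <- s | x != 0].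

Definition row_seq (m n : nat) (A : 'M[int]_(m, n)) (i : 'I_m) : seq int :=
  [seq A i j | j <- enum 'I_n].
Definition col_seq (m n : nat) (A : 'M[int]_(m, n)) (j : 'I_n) : seq int :=
  [seq A i j | i <- enum 'I_m].

Definition pasm (m n : nat) (A : 'M[int]_(m, n)) : bool :=
  [forall i, forall j, (A i j == -1) || (A i j == 0) || (A i j == 1)] &&
  [forall i, let s := row_seq A i in
     ((\sum_(x <- s) x == 0) || (\sum_(x <- s) x == 1)) &&
     alternating (nonzeros s) &&
     ((nonzeros s == [::]) || (last 0 (nonzeros s) == 1))] &&
  [forall j, let s := col_seq A j in
     ((\sum_(x <- s) x == 0) || (\sum_(x <- s) x == 1)) &&
     alternating (nonzeros s) &&
     ((nonzeros s == [::]) || (head 0 (nonzeros s) == 1))].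

Definition entry_sum (m n : nat) (A : 'M[int]_(m, n)) : int :=
  \sum_(i < m) \sum_(j < n) A i j.

(* The row conditions of a PASM say exactly that every suffix sum of a row is 0 or 1,
   and the column conditions that every prefix sum of a column is 0 or 1.  Since each
   row sums to 0 or 1, the total of the column prefix sums over the first k rows is
   nondecreasing in k; if the entries sum to 1 it is therefore at most 1, so after k
   rows at most one column, say column t_k - 1 (t_k = 0 if there is none), has prefix
   sum 1.  The matrix is recovered from t = (t_1, ..., t_m) in {0, ..., n}^m, its row
   conditions say precisely that t is nondecreasing, and its entry sum is 1 iff
   t_m <> 0.  Of the C(m + n, m) nondecreasing tuples only the zero tuple is lost. *)

From mathcomp Require Import all_boot all_order all_algebra.
From mathcomp Require Import zify.
Set Implicit Arguments. Unset Strict Implicit. Unset Printing Implicit Defensive.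
Import Order.TTheory GRing.Theory Num.Theory.
Local Open Scope ring_scope.

Definition is01 (x : int) : bool := (x == 0) || (x == 1).

Section SignSequences.
Implicit Types (s : seq int) (x y : int).

Fixpoint suffix_sums01 s : bool :=
  if s is _ :: t then is01 (\sum_(x <- s) x) && suffix_sums01 t else true.

Lemma suffix_sums01_cons x s :
  suffix_sums01 (x :: s) = is01 (\sum_(y <- x :: s) y) && suffix_sums01 s.
Proof. by []. Qed.

Lemma suffix_sums01_sum s : suffix_sums01 s -> is01 (\sum_(x <- s) x).
Proof. by case: s => [|x s] /=; [rewrite big_nil | case/andP]. Qed.

Lemma sum_nonzeros s : \sum_(x <- nonzeros s) x = \sum_(x <- s) x.
Proof. by rewrite big_filter big_rmcond // => x /negPn/eqP. Qed.

Lemma suffix_sums01_nonzeros s : suffix_sums01 (nonzeros s) = suffix_sums01 s.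
Proof.
elim: s => //= x s IH; rewrite /nonzeros /=; case: eqP => [->|_] /=.
  by rewrite big_cons add0r IH andb_idl // => /suffix_sums01_sum.
by rewrite !big_cons sum_nonzeros IH.
Qed.

Lemma suffix_sums01_cons_nonzero y s : y != 0 -> suffix_sums01 (y :: s) ->
  (y == 1) && (\sum_(x <- y :: s) x == 1) || (y == -1) && (\sum_(x <- y :: s) x == 0).
Proof.
move=> y0 /andP[]; rewrite big_cons => ys /suffix_sums01_sum; move: y0 ys.
set S := \sum_(x <- s) x; rewrite /is01; lia.
Qed.

Lemma alternating_cons2 x y s :
  alternating [:: x, y & s] = (y == - x) && alternating (y :: s).
Proof. by []. Qed.

Lemma suffix_sums01_alternating s : all (fun x => x != 0) s ->
  suffix_sums01 s = alternating s && ((s == [::]) || (last 0 s == 1)).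
Proof.
elim: s => // x s IH /andP[x0 s0].
case: s IH s0 => [|y s] IH s0.
  by rewrite /= big_seq1 andbT; move: x0; rewrite /is01; lia.
rewrite suffix_sums01_cons IH // alternating_cons2 -andbA.
have -> : ([:: x, y & s] == [::]) || (last 0 [:: x, y & s] == 1) =
          (y :: s == [::]) || (last 0 (y :: s) == 1) by [].
case ys: (alternating (y :: s) && _); last by rewrite !andbF.
have /andP[y0 _] := s0; rewrite -(IH s0) in ys.
rewrite !andbT big_cons; move: (suffix_sums01_cons_nonzero y0 ys) x0.
set S := \sum_(z <- y :: s) z; rewrite /is01; lia.
Qed.

Lemma row_conditionE s :
  is01 (\sum_(x <- s) x) && alternating (nonzeros s) &&
  ((nonzeros s == [::]) || (last 0 (nonzeros s) == 1)) = suffix_sums01 s.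
Proof.
rewrite -suffix_sums01_nonzeros suffix_sums01_alternating ?filter_all // -andbA.
apply: andb_idl; rewrite -suffix_sums01_alternating ?filter_all // -sum_nonzeros.
exact: suffix_sums01_sum.
Qed.

Lemma suffix_sums01P s :
  reflect (forall k, is01 (\sum_(x <- drop k s) x)) (suffix_sums01 s).
Proof.
elim: s => [|x s IH]; first by apply: (iffP idP) => // _ k; rewrite big_nil.
rewrite suffix_sums01_cons; apply: (iffP andP) => [[x01 /IH s01] [|k] //|sums].
  exact: s01.
by split; [apply: (sums 0%N) | apply/IH => k; apply: (sums k.+1)].
Qed.

Lemma suffix_sums01_entries s :
  suffix_sums01 s -> all (fun x => (x == -1) || (x == 0) || (x == 1)) s.
Proof.
elim: s => // x s IH; rewrite suffix_sums01_cons big_cons => /andP[xs ss].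
rewrite /= IH // andbT; move: xs (suffix_sums01_sum ss).
set S := \sum_(y <- s) y; rewrite /is01; lia.
Qed.

Lemma alternating_path x s : alternating (x :: s) = path (fun a b => b == - a) x s.
Proof. by elim: s x => // y s IH x; rewrite alternating_cons2 IH. Qed.

Lemma alternating_rev s : alternating (rev s) = alternating s.
Proof.
case: s => // x s; rewrite {1}lastI rev_rcons !alternating_path rev_path.
by apply: eq_path => a b; rewrite eq_sym -eqr_oppLR eq_sym.
Qed.

Lemma col_conditionE s :
  is01 (\sum_(x <- s) x) && alternating (nonzeros s) &&
  ((nonzeros s == [::]) || (head 0 (nonzeros s) == 1)) = suffix_sums01 (rev s).
Proof.
rewrite -row_conditionE big_rev /nonzeros filter_rev alternating_rev.
congr (_ && _); case: (filter _ s) => //= x t.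
by rewrite rev_cons last_rcons; case: (rev t).
Qed.

Lemma prefix_sums01P s :
  reflect (forall k, is01 (\sum_(x <- take k s) x)) (suffix_sums01 (rev s)).
Proof.
apply: (iffP (suffix_sums01P _)) => sums k; last by rewrite drop_rev big_rev.
have [le_ks|lt_sk] := leqP k (size s).
  by move: (sums (size s - k)%N); rewrite drop_rev subKn // big_rev.
by move: (sums 0%N); rewrite drop0 big_rev take_oversize // ltnW.
Qed.

Lemma sum_take_nth s k :
  \sum_(x <- take k.+1 s) x = \sum_(x <- take k s) x + nth 0 s k.
Proof.
elim: s k => [|x s IH] [|k] /=; rewrite ?big_nil ?big_cons ?addr0 //.
  by rewrite take0 big_nil addr0 add0r.
by rewrite IH addrA.
Qed.

Lemma sum_dropE s (f : nat -> int) :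
  (forall k, (size s <= k)%N -> f k = 0) ->
  (forall k, (k < size s)%N -> f k = nth 0 s k + f k.+1) ->
  forall k, \sum_(x <- drop k s) x = f k.
Proof.
elim: s f => [|x s IH] f f0 fS k; first by rewrite big_nil f0.
have IHs := IH (fun k => f k.+1) (fun k => f0 k.+1) (fun k => fS k.+1).
case: k => [|k] /=; last exact: IHs.
by rewrite big_cons fS //= -(IHs 0%N) drop0.
Qed.

End SignSequences.

Section PartialSums.
Variables m n : nat.
Implicit Type A : 'M[int]_(m, n).

Definition col_prefix_sum A k (j : 'I_n) : int := \sum_(x <- take k (col_seq A j)) x.
Definition row_suffix_sum A (i : 'I_m) k : int := \sum_(x <- drop k (row_seq A i)) x.

Lemma size_row_seq A i : size (row_seq A i) = n.
Proof. by rewrite size_map size_enum_ord. Qed.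

Lemma size_col_seq A j : size (col_seq A j) = m.
Proof. by rewrite size_map size_enum_ord. Qed.

Lemma nth_row_seq A i (j : 'I_n) : nth 0 (row_seq A i) j = A i j.
Proof. by rewrite (nth_map j) ?size_enum_ord ?nth_ord_enum. Qed.

Lemma nth_col_seq A (i : 'I_m) j : nth 0 (col_seq A j) i = A i j.
Proof. by rewrite (nth_map i) ?size_enum_ord ?nth_ord_enum. Qed.

Lemma pasmP A : pasm A <->
  (forall i k, is01 (row_suffix_sum A i k)) /\ (forall j k, is01 (col_prefix_sum A k j)).
Proof.
split.
  case/andP => /andP[_ /forallP rows] /forallP cols; split => [i|j].
    by apply/suffix_sums01P; rewrite -row_conditionE; apply: rows.
  by apply/prefix_sums01P; rewrite -col_conditionE; apply: cols.
case=> rows cols.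
have {}rows i : suffix_sums01 (row_seq A i) by apply/suffix_sums01P => k; apply: rows.
have {}cols j : suffix_sums01 (rev (col_seq A j)) by apply/prefix_sums01P => k; apply: cols.
apply/andP; split; [apply/andP; split|].
- apply/forallP => i; apply/forallP => j.
  by apply: (allP (suffix_sums01_entries (rows i))); apply: map_f; rewrite mem_enum.
- by apply/forallP => i; rewrite /= row_conditionE.
- by apply/forallP => j; rewrite /= col_conditionE.
Qed.

Lemma col_prefix_sum0 A j : col_prefix_sum A 0 j = 0.
Proof. by rewrite /col_prefix_sum take0 big_nil. Qed.

Lemma col_prefix_sumS A (i : 'I_m) j :
  col_prefix_sum A i.+1 j = col_prefix_sum A i j + A i j.
Proof. by rewrite /col_prefix_sum sum_take_nth nth_col_seq. Qed.

Lemma col_prefix_sum_full A k j : (m <= k)%N -> col_prefix_sum A k j = \sum_i A i j.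
Proof.
by move=> le_mk; rewrite /col_prefix_sum take_oversize ?size_col_seq // big_map big_enum.
Qed.

Lemma row_suffix_sum0 A i : row_suffix_sum A i 0 = \sum_j A i j.
Proof. by rewrite /row_suffix_sum drop0 big_map big_enum. Qed.

Lemma entry_sum_col_prefix A : entry_sum A = \sum_j col_prefix_sum A m j.
Proof.
by rewrite /entry_sum exchange_big; apply: eq_bigr => j _; rewrite col_prefix_sum_full.
Qed.

Lemma pasm_sum_col_prefix_le1 A : pasm A -> entry_sum A = 1 ->
  forall k, (k <= m)%N -> \sum_j col_prefix_sum A k j <= 1.
Proof.
move=> /pasmP[rows _] sum1 k le_km.
pose height k := \sum_j col_prefix_sum A k j.
have height_homo : {homo height : k l / (k <= l)%N >-> k <= l}.
  apply: homo_leq => [//|l k1 k2|l]; first exact: le_trans.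
  have [lt_lm|le_ml] := ltnP l m.
    rewrite /height (eq_bigr _ (fun j _ => col_prefix_sumS A (Ordinal lt_lm) j)).
    rewrite big_split /= lerDl -row_suffix_sum0.
    by move: (rows (Ordinal lt_lm) 0%N); rewrite /is01; lia.
  rewrite /height (eq_bigr _ (fun j _ => col_prefix_sum_full A j le_ml)).
  by rewrite (eq_bigr _ (fun j _ => col_prefix_sum_full A j (leqW le_ml))).
by rewrite -sum1 entry_sum_col_prefix; apply: height_homo.
Qed.

End PartialSums.

Lemma sum_indicator_eqS n v :
  \sum_(j < n) (v == j.+1)%:Z = ((0 < v) && (v <= n))%N%:Z.
Proof.
elim: n => [|n IH]; first by rewrite big_ord0; lia.
by rewrite big_ord_recr /= IH; lia.
Qed.

Section Levels.
Variables m n : nat.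
Implicit Type t : m.-tuple 'I_n.+1.

(* [level t k] is t_(k+1) in the notation above, and 0 for k >= m. *)
Definition level t k : nat := nth 0%N (map val t) k.

Definition level_indicator t k (j : 'I_n) : int :=
  ((0 < k)%N && (level t k.-1 == j.+1))%:Z.

Definition mx_of_levels t : 'M[int]_(m, n) :=
  \matrix_(i, j) (level_indicator t i.+1 j - level_indicator t i j).

Lemma level_le t k : (level t k <= n)%N.
Proof.
rewrite /level; have [lt_km|le_mk] := ltnP k m.
  by rewrite (nth_map ord0) ?size_tuple // -ltnS ltn_ord.
by rewrite nth_default // size_map size_tuple.
Qed.

Lemma levelE t (i : 'I_m) : level t i = tnth t i.
Proof. by rewrite /level (nth_map ord0) ?size_tuple // -tnth_nth. Qed.

Lemma level_homo t : sorted leq (map val t) ->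
  forall i j, (i <= j < m)%N -> (level t i <= level t j)%N.
Proof.
move=> sorted_t i j /andP[le_ij lt_jm].
apply: (sorted_leq_nth leq_trans leqnn) => //; rewrite inE size_map size_tuple //.
exact: leq_ltn_trans lt_jm.
Qed.

Lemma is01_level_indicator t k j : is01 (level_indicator t k j).
Proof. by rewrite /is01 /level_indicator; case: (_ && _). Qed.

Lemma col_prefix_sum_mx_of_levels t k j : (k <= m)%N ->
  col_prefix_sum (mx_of_levels t) k j = level_indicator t k j.
Proof.
elim: k => [|k IH] le_km; first by rewrite col_prefix_sum0.
by rewrite (col_prefix_sumS _ (Ordinal le_km)) (IH (ltnW le_km)) mxE addrC subrK.
Qed.

Lemma row_suffix_sum_mx_of_levels t (i : 'I_m) k :
  row_suffix_sum (mx_of_levels t) i k =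
  (k < level t i)%N%:Z - ((0 < i) && (k < level t i.-1))%N%:Z.
Proof.
move: k; apply: sum_dropE => k; rewrite size_row_seq => hk.
  by have := level_le t i; have := level_le t i.-1; lia.
rewrite (nth_row_seq _ i (Ordinal hk)) mxE /level_indicator /=; lia.
Qed.

Lemma entry_sum_mx_of_levels t : (0 < m)%N ->
  entry_sum (mx_of_levels t) = (level t m.-1 != 0)%N%:Z.
Proof.
move=> m_gt0; rewrite entry_sum_col_prefix.
under eq_bigr do rewrite col_prefix_sum_mx_of_levels // /level_indicator m_gt0.
by rewrite sum_indicator_eqS level_le andbT lt0n.
Qed.

Lemma mx_of_levels_inj : injective mx_of_levels.
Proof.
move=> t1 t2 eq_t; apply: eq_from_tnth => i; apply: val_inj; rewrite /= -!levelE.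
have eq_lv (j : 'I_n) : (level t1 i == j.+1) = (level t2 i == j.+1).
  have := col_prefix_sum_mx_of_levels t1 j (ltn_ord i).
  rewrite eq_t col_prefix_sum_mx_of_levels // /level_indicator /=; lia.
have [le1 le2] := (level_le t1 i, level_le t2 i).
case E1: (level t1 i) le1 => [|l1] le1.
  case E2: (level t2 i) le2 => [|l2] le2 //.
  by have := eq_lv (Ordinal le2); rewrite E1 E2 eqxx.
by have := eq_lv (Ordinal le1); rewrite E1 eqxx => /esym/eqP.
Qed.

Lemma pasm_mx_of_levels t : pasm (mx_of_levels t) = sorted leq (map val t).
Proof.
apply/idP/idP => [/pasmP[rows _] | sorted_t].
  apply/(sortedP 0%N) => i; rewrite size_map size_tuple => lt_i1m.
  have := rows (Ordinal lt_i1m) (level t i).-1.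
  by rewrite row_suffix_sum_mx_of_levels -/(level t i) -/(level t i.+1) /= /is01; lia.
apply/pasmP; split=> [i k | j k].
  have := level_homo sorted_t (i := i.-1) (j := i).
  rewrite row_suffix_sum_mx_of_levels leq_pred ltn_ord /is01; lia.
have [le_km|lt_mk] := leqP k m.
  by rewrite col_prefix_sum_mx_of_levels // is01_level_indicator.
rewrite (col_prefix_sum_full _ _ (ltnW lt_mk)) -(col_prefix_sum_full _ _ (leqnn m)).
by rewrite col_prefix_sum_mx_of_levels // is01_level_indicator.
Qed.

Lemma mx_of_levels_surj (A : 'M[int]_(m, n)) :
  (forall j k, is01 (col_prefix_sum A k j)) ->
  (forall k, (k <= m)%N -> \sum_j col_prefix_sum A k j <= 1) ->
  exists t, A = mx_of_levels t.
Proof.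
move=> cols total.
have col_uniq k j1 j2 : (k <= m)%N ->
    col_prefix_sum A k j1 = 1 -> col_prefix_sum A k j2 = 1 -> j1 = j2.
  move=> le_km c1 c2; apply/eqP; apply: contraTT (total k le_km) => ne12.
  rewrite (bigD1 j1) //= (bigD1 j2) 1?eq_sym //= c1 c2 -ltNge.
  set rest := \sum_(i < n | _) _; suff : 0 <= rest by lia.
  by apply: sumr_ge0 => j _; move: (cols j k); rewrite /is01; lia.
pose t : m.-tuple 'I_n.+1 := [tuple if [pick j | col_prefix_sum A i.+1 j == 1] is Some j
  then inord j.+1 else ord0 | i < m].
have prefixE k j : (k <= m)%N -> col_prefix_sum A k j = level_indicator t k j.
  case: k => [|k] le_km; first by rewrite col_prefix_sum0.
  rewrite /level_indicator /= (levelE t (Ordinal le_km)) tnth_mktuple.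
  case: pickP => [j0 /= /eqP c0 | /= none] /=.
    rewrite inordK ?ltnS // eqSS.
    have [<-|ne] := eqVneq j0 j; first by rewrite c0 eqxx.
    have /negbTE-> : val j0 != val j by [].
    move: (cols j k.+1); rewrite /is01 => /orP[/eqP // | /eqP cj].
    by case/eqP: ne; apply: col_uniq c0 cj.
  by move: (cols j k.+1) (none j); rewrite /is01 => /orP[] /eqP ->.
exists t; apply/matrixP => i j.
rewrite mxE -(prefixE _ _ (ltn_ord i)) -(prefixE _ _ (ltnW (ltn_ord i))).
by rewrite col_prefix_sumS addrC addKr.
Qed.

Definition zero_levels : m.-tuple 'I_n.+1 := [tuple ord0 | _ < m].

Lemma level_zero_levels k : level zero_levels k = 0%N.
Proof.
have [lt_km|le_mk] := ltnP k m.
  by rewrite (levelE _ (Ordinal lt_km)) tnth_mktuple.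
by rewrite /level nth_default // size_map size_tuple.
Qed.

Lemma sorted_levels_eq0 t :
  sorted leq (map val t) -> level t m.-1 = 0%N -> t = zero_levels.
Proof.
move=> sorted_t last0; apply: eq_from_tnth => i; apply: val_inj.
rewrite tnth_mktuple /= -levelE; apply/eqP; rewrite -leqn0 -last0.
by apply: (level_homo sorted_t); have := ltn_ord i; lia.
Qed.

Definition nonzero_sorted_levels : {set m.-tuple 'I_n.+1} :=
  [set t : m.-tuple 'I_n.+1 | sorted leq (map val t) && (level t m.-1 != 0)%N].

Lemma card_nonzero_sorted_levels :
  #|nonzero_sorted_levels| = ('C(m + n, m) - 1)%N.
Proof.
have sorted0 : sorted leq (map val zero_levels).
  apply/(sortedP 0%N) => i _.
  by rewrite -/(level zero_levels i) -/(level zero_levels i.+1) !level_zero_levels.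
rewrite -card_sorted_tuples [in RHS](cardsD1 zero_levels) inE sorted0 add1n subn1 /=.
apply: eq_card => t; rewrite !inE andbC.
case: (boolP (sorted _ _)) => sorted_t; rewrite ?andbF // !andbT.
apply/idP/idP; apply: contra.
  by move/eqP->; rewrite level_zero_levels.
by move/eqP/(sorted_levels_eq0 sorted_t)->.
Qed.

Lemma pasm_entry_sum1P (A : 'M[int]_(m, n)) : (0 < m)%N ->
  reflect (exists2 t, t \in nonzero_sorted_levels & A = mx_of_levels t)
          (pasm A && (entry_sum A == 1)).
Proof.
move=> m_gt0; apply: (iffP andP) => [[pasmA /eqP sum1] | [t + ->]].
  have [_ cols] := (pasmP A).1 pasmA.
  have [t defA] := mx_of_levels_surj cols (pasm_sum_col_prefix_le1 pasmA sum1).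
  exists t => //; rewrite inE -pasm_mx_of_levels -defA pasmA.
  by move: sum1; rewrite defA entry_sum_mx_of_levels //; lia.
rewrite inE => /andP[sorted_t last_t].
by rewrite pasm_mx_of_levels entry_sum_mx_of_levels // last_t.
Qed.

End Levels.

Theorem corollary3p22 (m n : nat) (hm : (0 < m)%N) (hn : (0 < n)%N) :
  exists s : seq 'M[int]_(m, n),
    [/\ uniq s,
        (forall A : 'M[int]_(m, n), (A \in s) = pasm A && (entry_sum A == 1)) &
        size s = ('C(m + n, m) - 1)%N].
Proof.
exists (map (@mx_of_levels m n) (enum (nonzero_sorted_levels m n))); split.
- by rewrite map_inj_uniq ?enum_uniq //; apply: mx_of_levels_inj.
- move=> A; apply/mapP/(pasm_entry_sum1P A hm) => -[t].
    by rewrite mem_enum; exists t.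
  by exists t; rewrite ?mem_enum.
- by rewrite size_map -cardE card_nonzero_sorted_levels.
Qed.
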